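(* Let $n_1,n_2,K_1,K_2$ be positive integers with $K_i\le n_i$. Fix clustering functions $z_1:\{1,\dots,n_1\}\to\{1,\dots,K_1\}$ and $z_2:\{1,\dots,n_2\}\to\{1,\dots,K_2\}$. Let $\mathcal D$ be the set of (non-symmetric) DCBM matrices of size $n_1\times n_2$ with $K_1\times K_2$ blocks, i.e. the matrices $\Theta\in[0,1]^{n_1\times n_2}$ of the form $$\Theta_{ij}=B_{z_1(i),z_2(j)}\,u_i\,v_j$$ for some $B\in\mathbb R_+^{K_1\times K_2}$, $u\in\mathbb R_+^{n_1}$ and $v\in\mathbb R_+^{n_2}$. Then for every $\delta\in(0,1]$ there is a $\delta$-net of $\mathcal D$ in Frobenius norm whose cardinality has logarithm at most $$(K_1K_2+n_1+n_2)\ln\Big(\frac{9}{\delta}\Big)+\Big(K_1K_2+\frac{n_1+n_2}{2}\Big)\ln(n_1n_2).$$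
   Context: A $\delta$-net of a set $\mathcal S$ of matrices in Frobenius norm is a finite set $\mathcal Y$ such that for every $S\in\mathcal S$ there is $Y\in\mathcal Y$ with $\|S-Y\|_F\le\delta$. *)

(* real numbers, ln. Matrices are functions nat -> nat -> R,
   with 0-indexed rows i < n1 and columns j < n2. *)
From Stdlib Require Export Reals List.
Open Scope R_scope.

Fixpoint sumR (n : nat) (f : nat -> R) : R :=
  match n with
  | O => 0
  | S m => sumR m f + f m
  end.

Definition mat := nat -> nat -> R.

Definition frob (n1 n2 : nat) (A : mat) : R :=
  sqrt (sumR n1 (fun i => sumR n2 (fun j => (A i j) ^ 2))).

Definition mat_sub (A B : mat) : mat := fun i j => A i j - B i j.

Definition DCBM (n1 n2 : nat) (z1 z2 : nat -> nat) (Theta : mat) : Prop :=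
  (forall i j, (i < n1)%nat -> (j < n2)%nat -> 0 <= Theta i j <= 1) /\
  exists (B : mat) (u v : nat -> R),
    (forall a b, 0 <= B a b) /\ (forall i, 0 <= u i) /\ (forall j, 0 <= v j) /\
    forall i j, (i < n1)%nat -> (j < n2)%nat ->
      Theta i j = B (z1 i) (z2 j) * u i * v j.

Definition is_net (n1 n2 : nat) (S : mat -> Prop) (delta : R) (Y : list mat) : Prop :=
  forall A, S A -> exists M, In M Y /\ frob n1 n2 (mat_sub A M) <= delta.

From Stdlib Require Import Reals List Lia Lra ZArith.
Open Scope R_scope.

(* After rescaling each block of [u] and of [v] by its maximum, the parameters
   [B], [u], [v] can all be taken in [0, 1]: a block maximum of [u] (resp. [v])
   is attained at some row [i] (column [j]), and there the rescaled [B] equals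
   [Theta i j <= 1].  Rounding each of the [K1 K2 + n1 + n2] parameters down to
   the grid [{0, 1/N, ..., 1}] moves every entry [B u v] by at most [3/N], hence
   the matrix by at most [3 sqrt(n1 n2) / N] in Frobenius norm.  Taking
   [N ~ 3 sqrt(n1 n2) / delta] gives a net with
   [(N + 1)^(K1 K2 + n1 + n2) <= (9 sqrt(n1 n2) / delta)^(K1 K2 + n1 + n2)]
   elements. *)

Lemma ln_le x y : 0 < x -> x <= y -> ln x <= ln y.
Proof.
  intros Hx [Hxy | <-]; [left; exact (ln_increasing _ _ Hx Hxy) | apply Rle_refl].
Qed.

Lemma sumR_le_const n f c : (forall i, (i < n)%nat -> f i <= c) -> sumR n f <= INR n * c.
Proof.
  induction n as [|n IH]; intros Hf; cbn [sumR]; [simpl; lra|].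
  rewrite S_INR.
  assert (sumR n f <= INR n * c) by (apply IH; intros; apply Hf; lia).
  specialize (Hf n ltac:(lia)). lra.
Qed.

Lemma frob_le_entrywise n1 n2 A e : 0 <= e ->
  (forall i j, (i < n1)%nat -> (j < n2)%nat -> Rabs (A i j) <= e) ->
  frob n1 n2 A <= sqrt (INR (n1 * n2)) * e.
Proof.
  intros He HA. unfold frob.
  rewrite <- (sqrt_pow2 e He), <- sqrt_mult by (try apply pos_INR; apply pow2_ge_0).
  apply sqrt_le_1_alt. rewrite mult_INR, Rmult_assoc.
  apply sumR_le_const; intros i Hi. apply sumR_le_const; intros j Hj.
  rewrite <- pow2_abs. apply pow_incr. split; [apply Rabs_pos | auto].
Qed.

Lemma Rabs_mult3_sub_le x y z x' y' z' e :
  0 <= y <= 1 -> 0 <= z <= 1 -> 0 <= x' <= 1 -> 0 <= y' <= 1 ->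
  Rabs (x - x') <= e -> Rabs (y - y') <= e -> Rabs (z - z') <= e ->
  Rabs (x * y * z - x' * y' * z') <= 3 * e.
Proof.
  intros Hy Hz Hx' Hy' Ex Ey Ez.
  replace (x * y * z - x' * y' * z')
    with ((x - x') * (y * z) + x' * (z * (y - y')) + x' * y' * (z - z')) by ring.
  assert (Hweight : forall p q, 0 <= q <= 1 -> Rabs (p * q) <= Rabs p).
  { intros p q Hq. rewrite Rabs_mult, (Rabs_right q) by lra.
    pose proof (Rabs_pos p). nra. }
  assert (T1 : Rabs ((x - x') * (y * z)) <= e)
    by (eapply Rle_trans; [apply Hweight; split; nra | exact Ex]).
  assert (T2 : Rabs (x' * (z * (y - y'))) <= e).
  { replace (x' * (z * (y - y'))) with ((y - y') * (x' * z)) by ring.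
    eapply Rle_trans; [apply Hweight; split; nra | exact Ey]. }
  assert (T3 : Rabs (x' * y' * (z - z')) <= e).
  { rewrite Rmult_comm. eapply Rle_trans; [apply Hweight; split; nra | exact Ez]. }
  pose proof (Rabs_triang ((x - x') * (y * z) + x' * (z * (y - y'))) (x' * y' * (z - z'))).
  pose proof (Rabs_triang ((x - x') * (y * z)) (x' * (z * (y - y')))).
  lra.
Qed.

Fixpoint maxR (n : nat) (f : nat -> R) : R :=
  match n with O => 0 | S m => Rmax (maxR m f) (f m) end.

Lemma maxR_ge n f i : (i < n)%nat -> f i <= maxR n f.
Proof.
  induction n as [|n IH]; intros Hi; [lia|]. simpl.
  destruct (Nat.eq_dec i n) as [-> | Hin]; [apply Rmax_r|].
  eapply Rle_trans; [apply IH; lia | apply Rmax_l].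
Qed.

Lemma maxR_ge0 n f : 0 <= maxR n f.
Proof. induction n; simpl; [lra|]. eapply Rle_trans; [eassumption | apply Rmax_l]. Qed.

Lemma maxR_attained n f : maxR n f = 0 \/ exists i, (i < n)%nat /\ maxR n f = f i.
Proof.
  induction n as [|n IH]; simpl; [now left|].
  unfold Rmax. destruct (Rle_dec (maxR n f) (f n)).
  - right; exists n; split; [lia | reflexivity].
  - destruct IH as [H | [i [Hi H]]]; [now left | right; exists i; split; [lia | exact H]].
Qed.

Section BlockMax.

Variables (n : nat) (z : nat -> nat) (u : nat -> R).
Hypothesis u_ge0 : forall i, 0 <= u i.

Definition block_max (a : nat) : R :=
  maxR n (fun i => if Nat.eq_dec (z i) a then u i else 0).

Lemma block_max_ge0 a : 0 <= block_max a.
Proof. apply maxR_ge0. Qed.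

Lemma le_block_max i : (i < n)%nat -> u i <= block_max (z i).
Proof.
  intros Hi. pose proof (maxR_ge n (fun k => if Nat.eq_dec (z k) (z i) then u k else 0) i Hi).
  simpl in H. destruct (Nat.eq_dec (z i) (z i)); [exact H | congruence].
Qed.

Lemma block_max_attained a :
  block_max a = 0 \/ exists i, (i < n)%nat /\ z i = a /\ block_max a = u i.
Proof.
  destruct (maxR_attained n (fun i => if Nat.eq_dec (z i) a then u i else 0))
    as [H | [i [Hi H]]]; [now left|].
  fold (block_max a) in H.
  destruct (Nat.eq_dec (z i) a) as [Ea | _]; [right; now exists i | now left].
Qed.

Definition block_normalized (i : nat) : R :=
  if Req_EM_T (block_max (z i)) 0 then 0 else u i / block_max (z i).

Lemma block_normalized_bounds i : (i < n)%nat -> 0 <= block_normalized i <= 1.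
Proof.
  intros Hi. unfold block_normalized.
  destruct (Req_EM_T (block_max (z i)) 0) as [|Hm]; [lra|].
  pose proof (le_block_max i Hi). pose proof (u_ge0 i). pose proof (block_max_ge0 (z i)).
  split.
  - apply Rle_mult_inv_pos; lra.
  - apply (Rmult_le_reg_r (block_max (z i))); [lra|]. field_simplify; lra.
Qed.

Lemma block_normalizedK i : (i < n)%nat -> u i = block_normalized i * block_max (z i).
Proof.
  intros Hi. unfold block_normalized.
  pose proof (le_block_max i Hi). pose proof (u_ge0 i).
  destruct (Req_EM_T (block_max (z i)) 0) as [E | Hm]; [rewrite E; lra | field; exact Hm].
Qed.

End BlockMax.

Lemma DCBM_unit_params n1 n2 z1 z2 Theta : DCBM n1 n2 z1 z2 Theta ->
  exists (B : mat) (u v : nat -> R),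
    (forall a b, 0 <= B a b <= 1) /\ (forall i, (i < n1)%nat -> 0 <= u i <= 1) /\
    (forall j, (j < n2)%nat -> 0 <= v j <= 1) /\
    forall i j, (i < n1)%nat -> (j < n2)%nat -> Theta i j = B (z1 i) (z2 j) * u i * v j.
Proof.
  intros [Hbnd [B [u [v [HB [Hu [Hv HT]]]]]]].
  set (mu := block_max n1 z1 u). set (mv := block_max n2 z2 v).
  exists (fun a b => B a b * mu a * mv b),
    (block_normalized n1 z1 u), (block_normalized n2 z2 v).
  split; [|split; [|split]].
  - intros a b.
    assert (Hmu := block_max_ge0 n1 z1 u a). assert (Hmv := block_max_ge0 n2 z2 v b).
    split; [apply Rmult_le_pos; [apply Rmult_le_pos|]; auto|].
    destruct (block_max_attained n1 z1 u a) as [E | [i [Hi [<- Ei]]]];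
      [fold mu in E; rewrite E; lra|].
    destruct (block_max_attained n2 z2 v b) as [E | [j [Hj [<- Ej]]]];
      [fold mv in E; rewrite E; lra|].
    fold mu in Ei. fold mv in Ej. rewrite Ei, Ej, <- HT by assumption.
    apply (Hbnd i j Hi Hj).
  - apply block_normalized_bounds; exact Hu.
  - apply block_normalized_bounds; exact Hv.
  - intros i j Hi Hj. rewrite HT, (block_normalizedK n1 z1 u Hu i Hi),
      (block_normalizedK n2 z2 v Hv j Hj) by assumption.
    unfold mu, mv. ring.
Qed.

Definition grid (N k : nat) : R := INR k / INR N.

(* [up y - 1] is the integer in [(y - 1, y]]. *)
Definition grid_index (N : nat) (x : R) : nat := Z.to_nat (up (x * INR N) - 1).

Lemma grid_index_spec N x : (0 < N)%nat -> 0 <= x <= 1 ->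
  (grid_index N x <= N)%nat /\ Rabs (x - grid N (grid_index N x)) <= 1 / INR N.
Proof.
  intros HN Hx. assert (HN' : 0 < INR N) by (apply lt_0_INR; lia).
  set (y := x * INR N).
  assert (Hy : 0 <= y <= INR N) by (unfold y; split; nra).
  destruct (archimed y) as [A1 A2].
  set (k := (up y - 1)%Z).
  assert (Hk : IZR k = IZR (up y) - 1) by (unfold k; rewrite minus_IZR; reflexivity).
  assert (k_ge0 : (0 <= k)%Z).
  { assert (Hk1 : IZR (-1) < IZR k) by lra. apply lt_IZR in Hk1. lia. }
  assert (k_leN : (k <= Z.of_nat N)%Z) by (apply le_IZR; rewrite <- INR_IZR_INZ; lra).
  assert (E : INR (grid_index N x) = IZR k).
  { unfold grid_index. fold y k. rewrite INR_IZR_INZ, Z2Nat.id; auto. }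
  split; [unfold grid_index; fold y k; lia|].
  unfold grid. rewrite E.
  replace (x - IZR k / INR N) with ((y - IZR k) * / INR N) by (unfold y; field; lra).
  assert (HiN : 0 < / INR N) by (apply Rinv_0_lt_compat, HN').
  rewrite Rabs_mult, (Rabs_right (/ INR N)) by lra. unfold Rdiv.
  apply Rmult_le_compat_r; [lra|].
  apply Rabs_le. lra.
Qed.

Lemma grid_bounds N k : (0 < N)%nat -> (k <= N)%nat -> 0 <= grid N k <= 1.
Proof.
  intros HN Hk. apply le_INR in Hk. assert (0 < INR N) by (apply lt_0_INR; lia).
  pose proof (pos_INR k). unfold grid. split.
  - apply Rle_mult_inv_pos; lra.
  - apply (Rmult_le_reg_r (INR N)); [lra|]. field_simplify; lra.
Qed.

Fixpoint tuples {A} (xs : list A) (L : nat) : list (list A) :=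
  match L with
  | O => nil :: nil
  | S L' => flat_map (fun t => map (fun x => x :: t) xs) (tuples xs L')
  end.

Lemma length_flat_map_const {A B} (f : A -> list B) l c :
  (forall x, length (f x) = c) -> length (flat_map f l) = (length l * c)%nat.
Proof. intros H; induction l; simpl; auto. rewrite length_app, H, IHl. reflexivity. Qed.

Lemma length_tuples {A} (xs : list A) L : length (tuples xs L) = (length xs ^ L)%nat.
Proof.
  induction L as [|L IH]; simpl; auto.
  rewrite (length_flat_map_const _ _ (length xs)) by (intros; apply length_map).
  rewrite IH. lia.
Qed.

Lemma in_tuples {A} (xs : list A) l L : length l = L -> incl l xs -> In l (tuples xs L).
Proof.
  intros <-. induction l as [|a l IH]; intros Hl; simpl; [auto|].
  apply in_flat_map. exists l. split.
  - apply IH. intros x Hx; apply Hl; simpl; auto.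
  - apply in_map_iff. exists a. split; [reflexivity | apply Hl; simpl; auto].
Qed.

Lemma nth_map_seq {A} (f : nat -> A) n i d : (i < n)%nat -> nth i (map f (seq 0 n)) d = f i.
Proof.
  intros H. rewrite (nth_indep _ _ (f 0%nat)) by (rewrite length_map, length_seq; auto).
  rewrite map_nth, seq_nth by auto. reflexivity.
Qed.

Section GridNet.

Variables (n1 n2 K1 K2 N : nat) (z1 z2 : nat -> nat).
Let G := seq 0 (S N).

(* [tB] lists the grid indices of [B] row by row; [tu], [tv] those of [u], [v]. *)
Definition grid_dcbm (tB : list (list nat)) (tu tv : list nat) : mat := fun i j =>
  grid N (nth (z2 j) (nth (z1 i) tB nil) 0%nat) * grid N (nth i tu 0%nat) * grid N (nth j tv 0%nat).

Definition grid_net : list mat :=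
  flat_map (fun tB => flat_map (fun tu => map (grid_dcbm tB tu) (tuples G n2))
                                (tuples G n1))
           (tuples (tuples G K2) K1).

Lemma length_grid_net : length grid_net = (S N ^ (K1 * K2 + n1 + n2))%nat.
Proof.
  unfold grid_net.
  rewrite (length_flat_map_const _ _ (length (tuples G n1) * length (tuples G n2))).
  2:{ intros x. apply length_flat_map_const. intros; apply length_map. }
  rewrite !length_tuples. unfold G. rewrite length_seq.
  rewrite <- Nat.pow_mul_r, <- !Nat.pow_add_r. f_equal. lia.
Qed.

Hypothesis N_gt0 : (0 < N)%nat.
Hypothesis z1_lt : forall i, (i < n1)%nat -> (z1 i < K1)%nat.
Hypothesis z2_lt : forall j, (j < n2)%nat -> (z2 j < K2)%nat.

Definition round_tuple (n : nat) (f : nat -> R) : list nat :=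
  map (fun i => grid_index N (f i)) (seq 0 n).

Lemma round_tuple_in_tuples n f : (forall i, (i < n)%nat -> 0 <= f i <= 1) ->
  In (round_tuple n f) (tuples G n).
Proof.
  intros Hf. apply in_tuples; [unfold round_tuple; now rewrite length_map, length_seq|].
  intros k Hk. apply in_map_iff in Hk as [i [<- Hi]]. apply in_seq in Hi.
  apply in_seq. destruct (grid_index_spec N (f i) N_gt0 (Hf i ltac:(lia))). lia.
Qed.

Lemma grid_net_entrywise (B : mat) (u v : nat -> R) :
  (forall a b, 0 <= B a b <= 1) -> (forall i, (i < n1)%nat -> 0 <= u i <= 1) ->
  (forall j, (j < n2)%nat -> 0 <= v j <= 1) ->
  exists M, In M grid_net /\ forall i j, (i < n1)%nat -> (j < n2)%nat ->
    Rabs (B (z1 i) (z2 j) * u i * v j - M i j) <= 3 * (1 / INR N).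
Proof.
  intros HB Hu Hv.
  set (tB := map (fun a => round_tuple K2 (B a)) (seq 0 K1)).
  exists (grid_dcbm tB (round_tuple n1 u) (round_tuple n2 v)). split.
  - apply in_flat_map. exists tB. split.
    { apply in_tuples; [unfold tB; now rewrite length_map, length_seq|].
      intros t Ht. apply in_map_iff in Ht as [a [<- _]].
      apply round_tuple_in_tuples. intros; apply HB. }
    apply in_flat_map. exists (round_tuple n1 u). split; [apply round_tuple_in_tuples, Hu|].
    apply in_map_iff. exists (round_tuple n2 v). split; [reflexivity|].
    apply round_tuple_in_tuples, Hv.
  - intros i j Hi Hj. unfold grid_dcbm, tB, round_tuple.
    rewrite !(nth_map_seq _ K1), !(nth_map_seq _ K2), !(nth_map_seq _ n1), !(nth_map_seq _ n2)
      by auto.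
    destruct (grid_index_spec N _ N_gt0 (HB (z1 i) (z2 j))) as [KB EB].
    destruct (grid_index_spec N _ N_gt0 (Hu i Hi)) as [Ku Eu].
    destruct (grid_index_spec N _ N_gt0 (Hv j Hj)) as [Kv Ev].
    apply Rabs_mult3_sub_le; auto using grid_bounds.
Qed.

Lemma grid_net_covers Theta : DCBM n1 n2 z1 z2 Theta ->
  exists M, In M grid_net /\ frob n1 n2 (mat_sub Theta M) <= sqrt (INR (n1 * n2)) * (3 * (1 / INR N)).
Proof.
  intros HT. destruct (DCBM_unit_params _ _ _ _ _ HT) as [B [u [v [HB [Hu [Hv ET]]]]]].
  destruct (grid_net_entrywise B u v HB Hu Hv) as [M [HM Herr]].
  exists M. split; [exact HM|].
  apply frob_le_entrywise.
  - assert (0 < INR N) by (apply lt_0_INR; lia). apply Rmult_le_pos; [lra|].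
    apply Rle_mult_inv_pos; lra.
  - intros i j Hi Hj. unfold mat_sub. rewrite ET by assumption. auto.
Qed.

End GridNet.

Lemma exists_resolution s delta : 1 <= s -> 0 < delta <= 1 ->
  exists N : nat, (0 < N)%nat /\ s * (3 * (1 / INR N)) <= delta /\ INR (S N) <= 9 / delta * s.
Proof.
  intros Hs Hd.
  assert (Hsd : 1 <= s / delta) by (apply (Rmult_le_reg_r delta); [lra|]; field_simplify; nra).
  destruct (archimed (3 * (s / delta))) as [A1 A2].
  assert (Hup : (0 <= up (3 * (s / delta)))%Z) by (apply le_IZR; lra).
  exists (Z.to_nat (up (3 * (s / delta)))).
  assert (E : INR (Z.to_nat (up (3 * (s / delta)))) = IZR (up (3 * (s / delta))))
    by (rewrite INR_IZR_INZ, Z2Nat.id; auto).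
  assert (HN : 0 < INR (Z.to_nat (up (3 * (s / delta))))) by lra.
  split; [apply INR_lt; simpl; lra|]. split.
  - apply (Rmult_le_reg_r (INR (Z.to_nat (up (3 * (s / delta)))))); [lra|].
    field_simplify; [|lra].
    assert (3 * s <= delta * (3 * (s / delta))) by (right; field; lra). nra.
  - rewrite S_INR. replace (9 / delta * s) with (9 * (s / delta)) by (field; lra). lra.
Qed.

Lemma ln_pow_le M L c s : (0 < M)%nat -> 0 < c -> 0 < s -> INR M <= c * s ->
  ln (INR (M ^ L)) <= INR L * ln c + INR L * ln s.
Proof.
  intros HM Hc Hs HMcs. assert (0 < INR M) by (apply lt_0_INR; exact HM).
  rewrite pow_INR, ln_pow, <- Rmult_plus_distr_l, <- ln_mult by assumption.
  apply Rmult_le_compat_l; [apply pos_INR | apply ln_le; assumption].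
Qed.

Theorem lemma2 (n1 n2 K1 K2 : nat) (z1 z2 : nat -> nat) (delta : R) :
  (0 < n1)%nat -> (0 < n2)%nat -> (0 < K1)%nat -> (0 < K2)%nat ->
  (K1 <= n1)%nat -> (K2 <= n2)%nat ->
  (forall i, (i < n1)%nat -> (z1 i < K1)%nat) ->
  (forall j, (j < n2)%nat -> (z2 j < K2)%nat) ->
  0 < delta <= 1 ->
  exists Y : list mat,
    is_net n1 n2 (DCBM n1 n2 z1 z2) delta Y /\
    ln (INR (length Y)) <=
      INR (K1 * K2 + n1 + n2) * ln (9 / delta)
      + (INR (K1 * K2) + INR (n1 + n2) / 2) * ln (INR (n1 * n2)).
Proof.
  intros Hn1 Hn2 _ _ _ _ Hz1 Hz2 Hd.
  set (s := sqrt (INR (n1 * n2))).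
  assert (Hnn : 1 <= INR (n1 * n2)) by (apply (le_INR 1); nia).
  assert (Hs : 1 <= s) by (rewrite <- sqrt_1; apply sqrt_le_1_alt; lra).
  destruct (exists_resolution s delta Hs Hd) as [N [HN [Hres HSN]]].
  exists (grid_net n1 n2 K1 K2 N z1 z2). split.
  - intros Theta HT.
    destruct (grid_net_covers n1 n2 K1 K2 N z1 z2 HN Hz1 Hz2 Theta HT) as [M [HM Hfrob]].
    exists M. split; [exact HM | eapply Rle_trans; [exact Hfrob | exact Hres]].
  - rewrite length_grid_net.
    assert (Hln : ln (INR (n1 * n2)) = 2 * ln s)
      by (unfold s; rewrite <- (sqrt_sqrt (INR (n1 * n2))) at 1 by lra;
          rewrite ln_mult by (apply sqrt_lt_R0; lra); ring).
    assert (0 <= ln s) by (rewrite <- ln_1; apply ln_le; lra).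
    eapply Rle_trans;
      [apply (ln_pow_le _ _ (9 / delta) s); [lia | apply Rdiv_lt_0_compat; lra | lra | exact HSN]|].
    rewrite Hln, !plus_INR. pose proof (pos_INR (K1 * K2)). nra.
Qed.
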